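(* Fix $n\ge1$ and let $\mathcal Z_n=\{H\in\mathcal H: X_n(H)=0\}$ be the zero set of $X_n$, i.e. the set of $H\in\mathcal H$ satisfying $$H^{(k+n)}-H^{(k)}H^{(n)}+\sum_{l=1}^{k}H^n_lH^{(k-l)}+\sum_{l=1}^{n}H^k_lH^{(n-l)}=0\quad\text{for all }k\ge0.$$ Then (i) every vector field $X_j$, $j\ge1$, is tangent to $\mathcal Z_n$; (ii) at every point of $\mathcal Z_n$ one has $\frac{\partial H^{(n)}}{\partial t_j}=0$ for all $j\ge1$; consequently (iii) the set $\mathcal S_n=\{H\in\mathcal Z_n: H^{(n)}=z^n\}$ is also invariant under all the flows $X_j$.
   Context: Let $z$ be a formal variable and $\mathcal L$ the space of formal Laurent series $\sum_{j\le N} l_j z^j$ (finitely many positive powers of $z$). Let $\mathcal H$ be the set of sequences $H=(H^{(k)})_{k\ge0}$ of elements of $\mathcal L$ with $H^{(0)}=1$ and, for $k\ge1$, $H^{(k)}=z^k+\sum_{l\ge1}H^k_l z^{-l}$; the coefficients $H^k_l$ are coordinates on $\mathcal H$, and we set $H^0_l=0$. The central system (CS) is the family of vector fields $X_j$, $j\ge1$, on $\mathcal H$, with associated times $t_j$, defined by $$\frac{\partial H^{(k)}}{\partial t_j}=H^{(j+k)}-H^{(j)}H^{(k)}+\sum_{l=1}^{k}H^j_lH^{(k-l)}+\sum_{l=1}^{j}H^k_lH^{(j-l)},\qquad k\ge0;$$ the right-hand side contains only negative powers of $z$, so this determines the components $X_j(H^k_l)$. *)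

From HB Require Import structures.
From mathcomp Require Import all_boot all_order all_algebra.
Set Implicit Arguments. Unset Strict Implicit. Unset Printing Implicit Defensive.
Import Order.TTheory GRing.Theory Num.Theory.
Local Open Scope ring_scope.

(* A point H of the space \mathcal H is given by its coordinates H^k_l,
   stored as a function  H : nat -> nat -> R ;  only the entries with
   k >= 1 and l >= 1 are meaningful (coordH masks the others, so that
   H^0_l = 0 as in the paper). *)
Definition coordH {R : comRingType} (H : nat -> nat -> R) (k l : nat) : R :=
  if (k == 0%N) || (l == 0%N) then 0 else H k l.

(* A formal Laurent series is represented by its coefficient function
   int -> R (coefficient of z^m).  H^{(0)} = 1 and
   H^{(k)} = z^k + \sum_{l>=1} H^k_l z^{-l} for k >= 1. *)
Definition Hser {R : comRingType} (H : nat -> nat -> R) (k : nat) : int -> R :=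
  fun m => if k == 0%N then (m == 0)%:R
           else if m == k%:Z then 1
           else if m < 0 then coordH H k (absz m)
           else 0.

(* Product of two Laurent series f, g whose coefficients vanish above degree
   N, resp. M:  (fg)_m = \sum_{a + b = m, a <= N, b <= M} f_a g_b
   (a = m - M + i, b = M - i, 0 <= i <= N + M - m). *)
Definition lmul {R : comRingType} (N M : nat) (f g : int -> R) (m : int) : R :=
  \sum_(i < (if m <= (N + M)%N%:Z then (absz ((N + M)%N%:Z - m)).+1 else 0%N))
     f (m - M%:Z + i%:Z) * g (M%:Z - i%:Z).

(* Coefficient of z^m in the right-hand side of dH^{(k)}/dt_j :
   H^{(j+k)} - H^{(j)}H^{(k)} + \sum_{l=1}^k H^j_l H^{(k-l)}
                              + \sum_{l=1}^j H^k_l H^{(j-l)}. *)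
Definition rhs {R : comRingType} (j k : nat) (H : nat -> nat -> R) (m : int) : R :=
  Hser H (j + k) m - lmul j k (Hser H j) (Hser H k) m
  + \sum_(1 <= l < k.+1) coordH H j l * Hser H (k - l) m
  + \sum_(1 <= l < j.+1) coordH H k l * Hser H (j - l) m.

(* The vector field X_j at H: its components X_j(H^k_l) are the
   coefficients of z^{-l} in the right-hand side. *)
Definition Xfield {R : comRingType} (j : nat) (H : nat -> nat -> R) : nat -> nat -> R :=
  fun k l => rhs j k H (- (l%:Z)).

(* Directional derivative at H, along the tangent vector V, of a function F
   on \mathcal H that is given by a universal (polynomial) formula over any
   commutative ring: coefficient of eps in F(H + eps V), computed in R[eps]. *)
Definition ddir {R : comRingType}
  (F : forall S : comRingType, (nat -> nat -> S) -> S)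
  (H V : nat -> nat -> R) : R :=
  (F {poly R} (fun a b => (H a b)%:P + V a b *: 'X))`_1.

Definition Zset {R : comRingType} (n : nat) (H : nat -> nat -> R) : Prop :=
  forall (k : nat) (m : int), rhs n k H m = 0.

Definition Sset {R : comRingType} (n : nat) (H : nat -> nat -> R) : Prop :=
  Zset n H /\ forall m : int, Hser H n m = (m == n%:Z)%:R.

Definition Zeq (n k : nat) (m : int) : forall S : comRingType, (nat -> nat -> S) -> S :=
  fun S G => rhs n k G m.
Definition Heq (n : nat) (m : int) : forall S : comRingType, (nat -> nat -> S) -> S :=
  fun S G => Hser G n m.

From HB Require Import structures.
From mathcomp Require Import all_boot all_order all_algebra.
From mathcomp Require Import zify ring.
Import Order.TTheory GRing.Theory Num.Theory.
Set Implicit Arguments.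
Unset Strict Implicit.
Unset Printing Implicit Defensive.
Local Open Scope ring_scope.

(* Write g_{jk} := H^{(j)} H^{(k)} and let P replace each power z^t, t >= 0, of a
   Laurent series by H^{(t)}.  Expanding g_{jk} shows that the flows are of Lax type,
     dH^{(k)}/dt_j = P(g_{jk}) - g_{jk},
   so the right-hand side has only negative powers of z and is symmetric in j, k; on
   Z_n this reads P(g_{nk}) = g_{nk}.  Symmetry gives (ii), and (i) with (ii) gives (iii).
   For (i), differentiate X_n(H)^{(k)} = (P - 1) g_{nk} along X_j.  Since dH^{(n)}/dt_j
   vanishes on Z_n, the derivative is
     sum_t (g_{nk})_t dH^{(t)}/dt_j + (P - 1)(H^{(n)} dH^{(k)}/dt_j).
   Inserting the Lax form and P(g_{nk}) = g_{nk}, the first term becomes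
   (P - 1)(H^{(j)} H^{(n)} H^{(k)}) and the second one becomes
   sum_t (g_{jk})_t X_n(H)^{(t)} - (P - 1)(H^{(n)} H^{(j)} H^{(k)}), so everything
   cancels on Z_n.  Products of Laurent series are computed as polynomial products in
   w = z^{-1}, and derivatives as eps-coefficients over R[eps] = {poly R}. *)

Section CoefficientSums.
Variable S : nzSemiRingType.
Implicit Types p q : {poly S}.

Lemma eq_coefM p p' q q' d :
    (forall i, (i <= d)%N -> p`_i = p'`_i) -> (forall i, (i <= d)%N -> q`_i = q'`_i) ->
  (p * q)`_d = (p' * q')`_d.
Proof.
move=> epp' eqq'; rewrite !coefM; apply: eq_bigr => i _.
by rewrite epp' ?eqq' ?leq_subr // -ltnS.
Qed.

Lemma coef1M p q : (p * q)`_1 = p`_0 * q`_1 + p`_1 * q`_0.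
Proof. by rewrite coefM big_ord_recr big_ord1 /= addrC. Qed.

Lemma sum_natr_eq B a (F : nat -> S) :
  (a < B)%N -> \sum_(t < B) (t == a :> nat)%:R * F t = F a.
Proof.
move=> ltaB; rewrite (bigD1 (Ordinal ltaB)) //= eqxx mul1r big1 ?addr0 // => t /eqP neq.
by case: eqP => [eqta | _]; [case: neq; apply: val_inj | rewrite mul0r].
Qed.

Lemma sum_if_lt B k (c F : nat -> S) : c 0%N = 0 -> (k < B)%N ->
  \sum_(t < B) (if (k < t)%N then 0 else c (k - t)%N) * F t
  = \sum_(1 <= l < k.+1) c l * F (k - l)%N.
Proof.
move=> c0 ltkB; transitivity (\sum_(t < k.+1) c (k - t)%N * F t).
  have /= -> := big_ord_widen B (fun t => c (k - t)%N * F t) ltkB.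
  rewrite [RHS]big_mkcond; apply: eq_bigr => t _.
  by rewrite ltnS; case: leqP; rewrite ?mul0r.
rewrite big_ord_recr /= subnn c0 mul0r addr0 big_add1 big_mkord.
rewrite (reindex_inj rev_ord_inj); apply: eq_bigr => t _ /=.
by congr (c _ * _); have := ltn_ord t; lia.
Qed.
End CoefficientSums.

Section LaurentProduct.
Variable S : comNzRingType.
Implicit Types f g h : int -> S.

(* [lpoly N T f] is z^{-N} f written in w = z^{-1}, truncated to degree < T. *)
Definition lpoly (N T : nat) f : {poly S} := \poly_(i < T) f (N%:Z - i%:Z).

Definition ldeg_le f (N : nat) := forall y, N%:Z < y -> f y = 0.

Lemma lmul_out N M f g x : (N + M)%N%:Z < x -> lmul N M f g x = 0.
Proof. by move=> hx; rewrite /lmul ifF ?big_ord0 //; apply/negbTE; rewrite -ltNge. Qed.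

Lemma ldeg_lmul N M f g : ldeg_le (lmul N M f g) (N + M).
Proof. exact: lmul_out. Qed.

Lemma lmul_lpoly N M f g T d : (d < T)%N ->
  lmul N M f g ((N + M)%N%:Z - d%:Z) = (lpoly N T f * lpoly M T g)`_d.
Proof.
move=> ltdT; rewrite /lmul coefM.
have -> : ((N + M)%N%:Z - d%:Z <= (N + M)%N%:Z) = true by lia.
have -> : absz ((N + M)%N%:Z - ((N + M)%N%:Z - d%:Z))%R = d by lia.
rewrite (reindex_inj rev_ord_inj) /=; apply: eq_bigr => i _.
have ltid := ltn_ord i; rewrite !coef_poly subSS.
have -> : (i < T)%N by lia.
have -> : (d - i < T)%N by lia.
by congr (f _ * g _); lia.
Qed.

Lemma lmulC N M f g x : lmul N M f g x = lmul M N g f x.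
Proof.
case: (lerP x (N + M)%N%:Z) => hx; last by rewrite !lmul_out // addnC.
set d := absz ((N + M)%N%:Z - x)%R; have -> : x = (N + M)%N%:Z - d%:Z by lia.
by rewrite [in RHS]addnC !(@lmul_lpoly _ _ _ _ d.+1) // mulrC.
Qed.

Lemma coef_lpoly_lmul N M f g T i : (i < T)%N ->
  (lpoly (N + M) T (lmul N M f g))`_i = (lpoly N T f * lpoly M T g)`_i.
Proof. by move=> ltiT; rewrite coef_poly ltiT (lmul_lpoly N M f g ltiT). Qed.

Lemma lmulA N M K f g h x :
  lmul (N + M) K (lmul N M f g) h x = lmul N (M + K) f (lmul M K g h) x.
Proof.
case: (lerP x (N + M + K)%N%:Z) => hx; last by rewrite !lmul_out // addnA.
set d := absz ((N + M + K)%N%:Z - x)%R.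
have -> : x = (N + M + K)%N%:Z - d%:Z by lia.
rewrite (@lmul_lpoly _ _ _ _ d.+1) // -addnA (@lmul_lpoly _ _ _ _ d.+1) //.
transitivity ((lpoly N d.+1 f * lpoly M d.+1 g * lpoly K d.+1 h)`_d).
  by apply: eq_coefM => // i hi; rewrite coef_lpoly_lmul.
by rewrite -mulrA; apply: eq_coefM => // i hi; rewrite coef_lpoly_lmul.
Qed.

Lemma lmul_widenr N M M' f g x :
  ldeg_le g M -> (M <= M')%N -> lmul N M' f g x = lmul N M f g x.
Proof.
move=> degg leMM'; set s := (M' - M)%N.
case: (lerP x (N + M')%N%:Z) => hx; last by rewrite !lmul_out //; lia.
set d := absz ((N + M')%N%:Z - x)%R; have -> : x = (N + M')%N%:Z - d%:Z by lia.
rewrite (@lmul_lpoly _ _ _ _ d.+1) // (eq_coefM (p' := lpoly N d.+1 f) (q' := lpoly M d.+1 g * 'X^s)) //.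
  rewrite mulrA coefMXn; case: ltnP => [ltds|leds]; first by rewrite lmul_out //; lia.
  have -> : (N + M')%N%:Z - d%:Z = (N + M)%N%:Z - (d - s)%N%:Z by lia.
  by rewrite (@lmul_lpoly _ _ _ _ d.+1) //; lia.
move=> i lei; rewrite coefMXn !coef_poly.
have -> : (i < d.+1)%N by lia.
case: ltnP => [ltis|leis]; first by rewrite degg //; lia.
have -> : (i - s < d.+1)%N by lia.
by congr g; lia.
Qed.

Lemma eq_lmul N M f f' g g' x :
  f =1 f' -> g =1 g' -> lmul N M f g x = lmul N M f' g' x.
Proof. by move=> eqf eqg; apply: eq_bigr => i _; rewrite eqf eqg. Qed.

Lemma lmul_sumr N M f T (c : nat -> S) (F : nat -> int -> S) x :
  lmul N M f (fun y => \sum_(t < T) c t * F t y) x = \sum_(t < T) c t * lmul N M f (F t) x.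
Proof.
rewrite /lmul; under eq_bigr do rewrite mulr_sumr.
rewrite exchange_big /=; apply: eq_bigr => t _; rewrite mulr_sumr.
by apply: eq_bigr => i _; rewrite mulrCA.
Qed.

Lemma lmulBr N M f g g' x :
  lmul N M f (fun y => g y - g' y) x = lmul N M f g x - lmul N M f g' x.
Proof. by rewrite /lmul -sumrB; apply: eq_bigr => i _; rewrite mulrBr. Qed.

Lemma lmul0l N M f g x : f =1 (fun _ => 0) -> lmul N M f g x = 0.
Proof. by move=> f0; rewrite /lmul big1 // => i _; rewrite f0 mul0r. Qed.

Lemma lmulCA N M K f g h x :
  lmul N (M + K) f (lmul M K g h) x = lmul M (N + K) g (lmul N K f h) x.
Proof.
rewrite -lmulA (@eq_lmul _ _ _ (lmul M N g f) _ h) => [|y|//]; last exact: lmulC.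
by rewrite addnC lmulA.
Qed.
End LaurentProduct.

Section HSeries.
Variables (S : comNzRingType) (H : nat -> nat -> S).
Local Notation Hs := (Hser H).

Lemma coordH0r k : coordH H k 0 = 0.
Proof. by rewrite /coordH orbT. Qed.

Lemma coordH0l l : coordH H 0 l = 0.
Proof. by []. Qed.

Lemma ldeg_Hser k : ldeg_le (Hs k) k.
Proof.
move=> y lt_ky; rewrite /Hser; have [_ | _] /= := eqVneq k 0%N.
  by have -> : (y == 0) = false by lia.
by rewrite !ifF //; lia.
Qed.

Lemma Hser_nonneg k (y : nat) : Hs k y%:Z = (k == y)%:R.
Proof.
rewrite /Hser; case: (eqVneq k 0%N) => [->|nzk] /=; first by case: y.
by case: (eqVneq y k) => [->|neq]; rewrite ?eqxx // ifF //; lia.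
Qed.

Lemma Hser_shift k i :
  Hs k (k%:Z - i%:Z) = (i == 0)%:R + (k <= i)%:R * coordH H k (i - k).
Proof.
rewrite /Hser; have [-> | nzk] /= := eqVneq k 0%N.
  by rewrite mulr0 addr0 sub0r oppr_eq0.
case: (ltngtP i k) => [ltik | ltki | ->].
- have -> : (k%:Z - i%:Z == k%:Z) = (i == 0)%N by lia.
  rewrite mul0r addr0; case: (eqVneq i 0%N) => // nzi.
  by rewrite ifF //; lia.
- rewrite ifF; last lia.
  rewrite ifT; last lia.
  have -> : (i == 0)%N = false by lia.
  by rewrite add0r mul1r; congr coordH; lia.
- by rewrite subrr subnn coordH0r mulr0 addr0 (negbTE nzk) ifF ?ltxx //; lia.
Qed.

Definition coord_poly k T : {poly S} := \poly_(l < T) coordH H k l.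

Lemma coef_lpoly_Hser k T i :
  (i < T)%N -> (lpoly k T (Hs k))`_i = (1 + 'X^k * coord_poly k T)`_i.
Proof.
move=> ltiT; rewrite coef_poly ltiT Hser_shift coefD coef1 coefXnM.
case: leqP => [leki | ltik]; last by rewrite mul0r.
by rewrite mul1r coef_poly ifT //; lia.
Qed.

Lemma coef_lpoly_HserM j k T d : (d < T)%N -> (d <= j + k)%N ->
  (lpoly j T (Hs j) * lpoly k T (Hs k))`_d = (d == 0)%:R
    + (if (d < j)%N then 0 else coordH H j (d - j))
    + (if (d < k)%N then 0 else coordH H k (d - k)).
Proof.
move=> ltdT ledjk.
rewrite (eq_coefM (p' := 1 + 'X^j * coord_poly j T) (q' := 1 + 'X^k * coord_poly k T));
  try by move=> i lei; rewrite coef_lpoly_Hser //; lia.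
rewrite mulrDl !mulrDr !mul1r mulr1 mulrACA -exprD !coefD coef1 !coefXnM.
have -> : (if (d < j + k)%N then 0 else (coord_poly j T * coord_poly k T)`_(d - (j + k))) = 0.
  case: ltnP => // lejkd; have -> : (d - (j + k))%N = 0%N by lia.
  by rewrite coef0M !coef_poly !coordH0r !if_same mul0r.
have ltT m : (d - m < T)%N by lia.
by rewrite !coef_poly !ltT addr0 addrAC.
Qed.

Lemma lmul_Hser_nonneg j k (t : nat) : lmul j k (Hs j) (Hs k) t%:Z = (t == j + k)%:R
    + (if (k < t)%N then 0 else coordH H j (k - t))
    + (if (j < t)%N then 0 else coordH H k (j - t)).
Proof.
case: (leqP t (j + k)) => letjk; last first.
  have neq : (t == j + k) = false by lia.
  by rewrite lmul_out ?neq ?ifT ?addr0 //; lia.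
have -> : t%:Z = (j + k)%N%:Z - (j + k - t)%N%:Z by lia.
rewrite (lmul_lpoly j k (Hs j) (Hs k) (ltnSn _)) coef_lpoly_HserM ?leq_subr //.
have -> : (j + k - t == 0)%N = (t == j + k) by lia.
have -> : (j + k - t < j)%N = (k < t)%N by lia.
have -> : (j + k - t < k)%N = (j < t)%N by lia.
by rewrite (_ : j + k - t - j = k - t)%N 1?(_ : j + k - t - k = j - t)%N //; lia.
Qed.

(* [Hproj B f] replaces z^t by H^{(t)} in f for 0 <= t < B and drops the rest of f. *)
Definition Hproj (B : nat) (f : int -> S) (y : int) : S := \sum_(t < B) f t%:Z * Hs t y.

Lemma rhsE j k B x : (j + k < B)%N ->
  rhs j k H x = Hproj B (lmul j k (Hs j) (Hs k)) x - lmul j k (Hs j) (Hs k) x.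
Proof.
move=> ltjkB; rewrite /rhs /Hproj.
under [in RHS]eq_bigr do rewrite lmul_Hser_nonneg !mulrDl.
rewrite !big_split /= (@sum_natr_eq _ _ _ (Hs ^~ x)) //.
rewrite (@sum_if_lt _ _ _ (coordH H j) (Hs ^~ x)) ?coordH0r //=; try lia.
rewrite (@sum_if_lt _ _ _ (coordH H k) (Hs ^~ x)) ?coordH0r //=; try lia.
ring.
Qed.

Lemma eq_Hproj B f f' y : f =1 f' -> Hproj B f y = Hproj B f' y.
Proof. by move=> eqf; apply: eq_bigr => t _; rewrite eqf. Qed.

Lemma Hproj_widen N B B' f y : ldeg_le f N -> (N < B)%N -> (B <= B')%N ->
  Hproj B' f y = Hproj B f y.
Proof.
move=> degf ltNB leBB'; rewrite /Hproj.
have /= -> := big_ord_widen B' (fun t => f t%:Z * Hs t y) leBB'.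
rewrite [RHS]big_mkcond; apply: eq_bigr => t _.
by case: ltnP => // leBt; rewrite degf ?mul0r //; lia.
Qed.

Lemma Hproj_sum B T (c : nat -> S) (F : nat -> int -> S) y :
  Hproj B (fun x => \sum_(t < T) c t * F t x) y = \sum_(t < T) c t * Hproj B (F t) y.
Proof.
rewrite /Hproj; under eq_bigr do rewrite mulr_suml.
rewrite exchange_big /=; apply: eq_bigr => t _; rewrite mulr_sumr.
by apply: eq_bigr => i _; rewrite mulrA.
Qed.

Lemma HprojB B f g y : Hproj B (fun x => f x - g x) y = Hproj B f y - Hproj B g y.
Proof. by rewrite /Hproj -sumrB; apply: eq_bigr => i _; rewrite mulrBl. Qed.

Lemma Hproj_nonneg N B f (y : nat) : ldeg_le f N -> (N < B)%N -> Hproj B f y%:Z = f y%:Z.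
Proof.
move=> degf ltNB; rewrite /Hproj; under eq_bigr do rewrite Hser_nonneg mulrC.
case: (ltnP y B) => [ltyB | leBy]; first by rewrite (@sum_natr_eq _ _ _ (fun t => f t%:Z)).
rewrite degf ?big1 // => [t _|]; last lia.
by rewrite (_ : (t == y :> nat) = false) ?mul0r //; have := ltn_ord t; lia.
Qed.

Lemma rhs_nonneg j k (y : nat) : rhs j k H y%:Z = 0.
Proof. by rewrite (rhsE _ (ltnSn _)) (Hproj_nonneg _ (ldeg_lmul _ _) (ltnSn _)) subrr. Qed.

Lemma ldeg_rhs j k N : ldeg_le (rhs j k H) N.
Proof. by move=> y lt_Ny; rewrite (_ : y = (absz y)%:Z) ?rhs_nonneg //; lia. Qed.

Lemma rhsC j k x : rhs j k H x = rhs k j H x.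
Proof.
rewrite !(rhsE _ (ltnSn _)) addnC lmulC; congr (_ - _).
by apply: eq_Hproj => y; apply: lmulC.
Qed.

Lemma lmul_Hser0l M g x : ldeg_le g M -> lmul 0 M (Hs 0) g x = g x.
Proof.
move=> degg; case: (lerP x M%:Z) => [lexM | ltMx]; last by rewrite lmul_out ?degg.
rewrite /lmul add0n lexM big_ord_recr /= big1 => [|i _]; last first.
  by rewrite /Hser /= (_ : (_ == 0) = false) ?mul0r //; have := ltn_ord i; lia.
by rewrite add0r /Hser /= (_ : (_ == 0) = true) ?mul1r; [congr g | ]; lia.
Qed.

Lemma rhs0r j x : rhs j 0 H x = 0.
Proof.
rewrite rhsC /rhs add0n lmul_Hser0l ?subrr ?add0r; last exact: ldeg_Hser.
by rewrite [X in _ + X]big_geq // addr0 big1 // => l _; rewrite coordH0l mul0r.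
Qed.

Lemma lmul_Hproj M N g f y :
  lmul M N g (Hproj N.+1 f) y = \sum_(t < N.+1) f t%:Z * lmul M t g (Hs t) y.
Proof.
rewrite /Hproj (lmul_sumr _ _ _ _ (fun t => f t%:Z) Hs); apply: eq_bigr => t _.
by rewrite (lmul_widenr _ _ _ (@ldeg_Hser t)) //; have := ltn_ord t; lia.
Qed.

Lemma sum_rhs j N B f m : (j + N < B)%N ->
  \sum_(t < N.+1) f t%:Z * rhs j t H m
  = Hproj B (lmul j N (Hs j) (Hproj N.+1 f)) m - lmul j N (Hs j) (Hproj N.+1 f) m.
Proof.
move=> ltjNB; have rhs_t (t : 'I_N.+1) :
    rhs j t H m = Hproj B (lmul j t (Hs j) (Hs t)) m - lmul j t (Hs j) (Hs t) m.
  by apply: rhsE; have := ltn_ord t; lia.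
under eq_bigr do rewrite rhs_t mulrBr.
rewrite sumrB -(Hproj_sum _ _ (fun t => f t%:Z) (fun t => lmul j t (Hs j) (Hs t))).
by rewrite lmul_Hproj; congr (_ - _); apply: eq_Hproj => y; rewrite lmul_Hproj.
Qed.

Lemma rhs_coordX j t y :
  rhs j t H y = if y < 0 then coordH (Xfield j H) t (absz y) else 0.
Proof.
case: ltrP => [y_lt0 | y_ge0]; last by rewrite (_ : y = (absz y)%:Z) ?rhs_nonneg //; lia.
rewrite /coordH; have [-> | nzt] /= := eqVneq t 0%N; first exact: rhs0r.
by rewrite ifF /Xfield; [congr rhs | ]; lia.
Qed.
End HSeries.

Section DualNumbers.
Variable S : comNzRingType.
Implicit Types (H V : nat -> nat -> S) (F G : int -> {poly S}) (f g : int -> S).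

Definition Hdual (H V : nat -> nat -> S) : nat -> nat -> {poly S} :=
  fun a b => (H a b)%:P + V a b *: 'X.

Lemma lmul_coef0 N M F G f g x : (forall y, (F y)`_0 = f y) -> (forall y, (G y)`_0 = g y) ->
  (lmul N M F G x)`_0 = lmul N M f g x.
Proof. by move=> F0 G0; rewrite coef_sum; apply: eq_bigr => i _; rewrite coef0M F0 G0. Qed.

Lemma lmul_coef1 N M F G f f' g g' x :
    (forall y, (F y)`_0 = f y) -> (forall y, (F y)`_1 = f' y) ->
    (forall y, (G y)`_0 = g y) -> (forall y, (G y)`_1 = g' y) ->
  (lmul N M F G x)`_1 = lmul N M f g' x + lmul N M f' g x.
Proof.
move=> F0 F1 G0 G1; rewrite coef_sum -big_split; apply: eq_bigr => i _.
by rewrite coef1M F0 F1 G0 G1.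
Qed.

Lemma coef0_Hser_dual H V t y : (Hser (Hdual H V) t y)`_0 = Hser H t y.
Proof.
rewrite /Hser /coordH /Hdual; case: (t == 0%N) => /=; first by case: (y == 0); rewrite ?coef1 ?coef0.
case: (y == t%:Z); first by rewrite coef1.
case: (y < 0); last by rewrite coef0.
case: (absz y == 0%N); first by rewrite coef0.
by rewrite coefD coefC coefZ coefX mulr0 addr0.
Qed.

Lemma coef1_Hser_dual H V t y :
  (Hser (Hdual H V) t y)`_1 = if y < 0 then coordH V t (absz y) else 0.
Proof.
rewrite /Hser /coordH /Hdual; case: (t == 0%N) => /=.
  by rewrite if_same; case: (y == 0); rewrite ?coef1 ?coef0.
case: (eqVneq y t%:Z) => [-> | _]; first by rewrite coef1 (_ : (t%:Z < 0) = false) //; lia.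
case: (y < 0); last by rewrite coef0.
case: (absz y == 0%N); first by rewrite coef0.
by rewrite coefD coefC coefZ coefX mulr1 add0r.
Qed.

Lemma ddir_Hser_Xfield H j t y : ddir (Heq t y) H (Xfield j H) = rhs j t H y.
Proof. by rewrite /ddir /Heq -/(Hdual H (Xfield j H)) coef1_Hser_dual rhs_coordX. Qed.
End DualNumbers.

Section ZeroSet.
Variables (S : comNzRingType) (H : nat -> nat -> S) (n : nat).
Hypothesis Zn : Zset n H.
Local Notation Hs := (Hser H).

Lemma Hproj_lmul_Zset k y :
  Hproj H (n + k).+1 (lmul n k (Hs n) (Hs k)) y = lmul n k (Hs n) (Hs k) y.
Proof. by apply/eqP; rewrite -subr_eq0 -(rhsE _ _ (ltnSn _)) Zn. Qed.

Lemma Zset_tangent_coef j k m :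
  \sum_(t < (n + k).+1) lmul n k (Hs n) (Hs k) t%:Z * rhs j t H m
  + (Hproj H (n + k).+1 (lmul n k (Hs n) (rhs j k H)) m - lmul n k (Hs n) (rhs j k H) m) = 0.
Proof.
set g := lmul n k (Hs n) (Hs k); set u := lmul j k (Hs j) (Hs k).
set W := lmul n k (Hs n) (rhs j k H); set B := (j + n + k).+1.
have gE : Hproj H (n + k).+1 g =1 g := Hproj_lmul_Zset k.
rewrite (@sum_rhs _ _ j (n + k) B g m); last by rewrite /B addnA.
have A1E y : lmul j (n + k) (Hs j) (Hproj H (n + k).+1 g) y = lmul n (j + k) (Hs n) u y.
  by rewrite (eq_lmul _ _ y (frefl _) gE) lmulCA.
have WE y : W y = lmul n (j + k) (Hs n) (Hproj H (j + k).+1 u) y - lmul n (j + k) (Hs n) u y.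
  rewrite /W -(lmul_widenr n (Hs n) y (@ldeg_rhs _ H j k k) (leq_addl j k)).
  by rewrite (eq_lmul _ _ y (frefl _) (fun z => rhsE H z (ltnSn _))) lmulBr.
have Zn_sum : \sum_(t < (j + k).+1) u t%:Z * rhs n t H m = 0.
  by rewrite big1 // => t _; rewrite Zn mulr0.
rewrite (@sum_rhs _ _ n (j + k) B u m) in Zn_sum; last by rewrite /B addnCA addnA.
rewrite -(@Hproj_widen _ H (n + k) (n + k).+1 B W m (ldeg_lmul _ _) (ltnSn _)); last first.
  by rewrite /B ltnS -addnA leq_addl.
rewrite (@eq_Hproj _ H B _ _ m WE) WE HprojB (@eq_Hproj _ H B _ _ m A1E) A1E.
by move/eqP: Zn_sum; rewrite subr_eq0 => /eqP ->; ring.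
Qed.

Lemma ddir_Zeq_Xfield j k m : ddir (Zeq n k m) H (Xfield j H) = 0.
Proof.
rewrite /ddir /Zeq -/(Hdual H (Xfield j H)); set G := Hdual H (Xfield j H).
have G0 t y : (Hser G t y)`_0 = Hs t y by exact: coef0_Hser_dual.
have G1 t y : (Hser G t y)`_1 = rhs j t H y by rewrite coef1_Hser_dual rhs_coordX.
have g0 x : (lmul n k (Hser G n) (Hser G k) x)`_0 = lmul n k (Hs n) (Hs k) x.
  exact: lmul_coef0.
have g1 x : (lmul n k (Hser G n) (Hser G k) x)`_1 = lmul n k (Hs n) (rhs j k H) x.
  rewrite (lmul_coef1 _ _ _ (G0 n) (G1 n) (G0 k) (G1 k)) [X in _ + X]lmul0l ?addr0 // => y.
  by rewrite rhsC Zn.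
rewrite (rhsE _ m (ltnSn _)) coefB /Hproj coef_sum.
under eq_bigr do rewrite coef1M g0 g1 G0 G1.
by rewrite g1 big_split /= -addrA; exact: Zset_tangent_coef.
Qed.
End ZeroSet.

Theorem mainTheorem5 (R : fieldType) (n : nat) (hn : (1 <= n)%N) :
  (forall H : nat -> nat -> R, Zset n H ->
     forall j : nat, (1 <= j)%N ->
     forall (k : nat) (m : int), ddir (Zeq n k m) H (Xfield j H) = 0)
  /\
  (forall H : nat -> nat -> R, Zset n H ->
     forall j : nat, (1 <= j)%N ->
     forall m : int, rhs j n H m = 0)
  /\
  (forall H : nat -> nat -> R, Sset n H ->
     forall j : nat, (1 <= j)%N ->
     (forall (k : nat) (m : int), ddir (Zeq n k m) H (Xfield j H) = 0)
     /\ (forall m : int, ddir (Heq n m) H (Xfield j H) = 0)).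
Proof.
have rhs_n_Zset H : Zset n H -> forall j m, rhs j n H m = 0.
  by move=> ZnH j m; rewrite rhsC ZnH.
split; [|split].
- by move=> H ZnH j _ k m; exact: ddir_Zeq_Xfield.
- by move=> H ZnH j _ m; exact: rhs_n_Zset.
- move=> H [ZnH _] j _; split => [k m | m]; first exact: ddir_Zeq_Xfield.
  by rewrite ddir_Hser_Xfield rhs_n_Zset.
Qed.
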